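(* Let $n\geq 3$ be an integer and let $G$ be a finite group with $n$ elements and identity $1$. Let $X_G$ be the Cayley graph of $G\times G$ with respect to the subset $\{(s,1),(1,s),(s,s): s\in G,\ s\neq 1\}$. Then: (i) $X_G$ is strongly regular with parameters $(n^2,\,3n-3,\,n,\,6)$, i.e. it has $n^2$ vertices, is regular of degree $3n-3$, any two adjacent vertices have exactly $n$ common neighbours, and any two distinct non-adjacent vertices have exactly $6$ common neighbours; (ii) the number of elements of order $2$ in $G$ is a graph invariant of $X_G$: if $G$ and $H$ are groups with $n$ elements and $X_G$ is isomorphic to $X_H$ as graphs, then $G$ and $H$ have the same number of elements of order $2$.
   Context: For a finite group $\Gamma$ and a subset $S\subseteq\Gamma$ that does not contain the identity, is closed under inverses, and generates $\Gamma$, the Cayley graph of $\Gamma$ with respect to $S$ has vertex set $\Gamma$ and an edge between $g$ and $h$ whenever $g^{-1}h\in S$. A regular graph is strongly regular if it is not complete and there are non-negative integers $a,c$ such that any two adjacent vertices have exactly $a$ common neighbours and any two distinct non-adjacent vertices have exactly $c$ common neighbours. *)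

From mathcomp Require Import all_boot all_fingroup.
Set Implicit Arguments. Unset Strict Implicit. Unset Printing Implicit Defensive.
Local Open Scope group_scope.

Definition cayley (T : finGroupType) (S : {set T}) : rel T :=
  fun g h => g^-1 * h \in S.

Definition srg (V : finType) (e : rel V) (v k a c : nat) : Prop :=
  [/\ #|V| = v,
      (exists x y, x != y /\ ~~ e x y),
      (forall x, #|[set y | e x y]| = k),
      (forall x y, e x y -> #|[set z | e x z && e y z]| = a) &
      (forall x y, x != y -> ~~ e x y -> #|[set z | e x z && e y z]| = c)].

(* The connection set {(s,1),(1,s),(s,s) : s <> 1} of G x G, using the
   direct product group structure on (gT * gT) from gproduct.v. *)
Definition XS (gT : finGroupType) : {set (gT * gT)%type} :=
  [set (s, 1) | s in [set~ (1 : gT)]] :|: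
  [set (1, s) | s in [set~ (1 : gT)]] :|:
  [set (s, s) | s in [set~ (1 : gT)]].

Definition XG (gT : finGroupType) : rel (gT * gT)%type := cayley (XS gT).

Definition graph_iso (V W : finType) (e : rel V) (f : rel W) : Prop :=
  exists phi : V -> W, bijective phi /\ forall x y, e x y = f (phi x) (phi y).

Definition n_invol (gT : finGroupType) : nat := #|[set x : gT | #[x] == 2]|.

Arguments XS gT : clear implicits.
Arguments XG gT : clear implicits.
Arguments n_invol gT : clear implicits.

(* Inside the connection set S, the union of the lines {(s,1)}, {(1,s)} and
   {(s,s)} (s <> 1), two points of one line are adjacent iff they are distinct,
   (s,1) ~ (1,t) iff st = 1, and the diagonal point (t,t) is adjacent to (s,1)
   or (1,s) iff s = t.  In a Cayley graph x and y have |S ∩ (x^-1 y)S| common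
   neighbours; by the adjacency rule this is (n-2) + 1 + 1 = n when x^-1 y lies
   in S and 2 + 2 + 2 = 6 otherwise.  The same rule shows that the triangles
   inside S are the triples of distinct points of one line and the triples
   (u,1), (1,u), (u,u) with u an involution.  So the number of vertices paired
   with an ordered triangle in their neighbourhood is
   n^2 (3(n-1)(n-2)(n-3) + 6 i(G)), i(G) the number of involutions, and this
   isomorphism invariant determines i(G). *)

From mathcomp Require Import all_boot all_fingroup cyclic.
Set Implicit Arguments. Unset Strict Implicit. Unset Printing Implicit Defensive.
Local Open Scope group_scope.

Lemma mulg_eqr (gT : finGroupType) (a b : gT) : (a * b == b) = (a == 1).
Proof. by rewrite -{2}[b]mul1g (inj_eq (mulIg b)). Qed.

Lemma mulg_eql (gT : finGroupType) (a b : gT) : (a * b == a) = (b == 1).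
Proof. by rewrite -{2}[a]mulg1 (inj_eq (mulgI a)). Qed.

Lemma mulVg_eq (gT : finGroupType) (a s c : gT) : (a^-1 * s == c) = (s == a * c).
Proof. by rewrite -(inj_eq (mulgI a)) mulKVg. Qed.

Lemma order_eq2 (gT : finGroupType) (u : gT) : (#[u] == 2) = (u != 1) && (u^-1 == u).
Proof.
apply/eqP/andP => [o2|[u1 /eqP uVu]].
  by rewrite -order_gt1 o2 invg2id.
have o_neq1 : #[u] != 1%N by rewrite order_eq1.
apply/(prime_nt_dvdP _ o_neq1) => //.
by rewrite order_dvdn expgS expg1 -{1}uVu mulVg.
Qed.

Lemma card_set_pair (I J : finType) (Q : I -> pred J) :
  #|[set p : I * J | Q p.1 p.2]| = (\sum_i #|[set j | Q i j]|)%N.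
Proof.
rewrite -sum1_card (eq_bigl (fun p => Q p.1 p.2)) => [|p]; last by rewrite inE.
rewrite -(pair_big_dep predT Q (fun _ _ => 1%N)); apply: eq_bigr => i _.
by rewrite -sum1_card; apply: eq_bigl => j; rewrite inE.
Qed.

Lemma ord3P (P : 'I_3 -> Prop) :
  P (Ordinal (isT : 0 < 3)) -> P (Ordinal (isT : 1 < 3)) -> P (Ordinal (isT : 2 < 3)) ->
  forall i, P i.
Proof. by move=> P0 P1 P2 [[|[|[|//]]] lt_i3]; rewrite (bool_irrelevance lt_i3 isT). Qed.

Section CayleyGraph.
Variables (T : finGroupType) (S : {set T}).
Implicit Types x y z : T.

Lemma cayley_mul2l x y z : cayley S (x * y) (x * z) = cayley S y z.
Proof. by rewrite /cayley invMg -mulgA mulKg. Qed.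

Lemma cayley1g z : cayley S 1 z = (z \in S).
Proof. by rewrite /cayley invg1 mul1g. Qed.

Lemma cayley_mulKg x z : cayley S x (x * z) = (z \in S).
Proof. by rewrite -{1}[x]mulg1 cayley_mul2l cayley1g. Qed.

Lemma card_set_mull x (P : pred T) : #|[set z | P z]| = #|[set z | P (x * z)]|.
Proof.
rewrite -(card_preimset _ (mulgI x)); apply: eq_card => z.
by rewrite !inE.
Qed.

Lemma card_cayley_nbhd x : #|[set z | cayley S x z]| = #|S|.
Proof. by rewrite (card_set_mull x); apply: eq_card => z; rewrite !inE cayley_mulKg. Qed.

Lemma card_cayley_common x y :
  #|[set z | cayley S x z && cayley S y z]| = #|[set z in S | cayley S (x^-1 * y) z]|.
Proof.
rewrite (card_set_mull x); apply: eq_card => z.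
by rewrite !inE cayley_mulKg -{1}[y](mulKVg x) cayley_mul2l.
Qed.

End CayleyGraph.

Section RootedK4.
Variable V : finType.
Implicit Type e : rel V.

Definition triangles e (A : {set V}) : {set {ffun 'I_3 -> V}} :=
  [set t : {ffun 'I_3 -> V} |
    [forall i, t i \in A] && [forall i, forall j, (i != j) ==> e (t i) (t j)]].

Definition rooted_K4 e : {set V * {ffun 'I_3 -> V}} :=
  [set p : V * {ffun 'I_3 -> V} | p.2 \in triangles e [set y | e p.1 y]].

End RootedK4.

Lemma card_rooted_K4_iso (V W : finType) (e : rel V) (f : rel W) :
  graph_iso e f -> #|rooted_K4 e| = #|rooted_K4 f|.
Proof.
case=> phi [phi_bij phiE].
pose F (p : V * {ffun 'I_3 -> V}) := (phi p.1, [ffun i => phi (p.2 i)]).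
have F_bij : bijective F.
  case: phi_bij => psi phiK psiK.
  exists (fun q : W * {ffun 'I_3 -> W} => (psi q.1, [ffun i => psi (q.2 i)])).
    by case=> x t; rewrite /F /= phiK; congr (_, _); apply/ffunP => i; rewrite !ffunE phiK.
  by case=> x t; rewrite /F /= psiK; congr (_, _); apply/ffunP => i; rewrite !ffunE psiK.
rewrite -(on_card_preimset (onW_bij _ F_bij)); apply: eq_card => -[x t].
rewrite !inE /=; congr (_ && _); apply: eq_forallb => i.
  by rewrite ffunE !inE phiE.
by apply: eq_forallb => j; rewrite !ffunE phiE.
Qed.

Lemma card_rooted_K4_cayley (T : finGroupType) (S : {set T}) :
  #|rooted_K4 (cayley S)| = (#|T| * #|triangles (cayley S) S|)%N.
Proof.
pose F (p : T * {ffun 'I_3 -> T}) := (p.1, [ffun i => p.1 * p.2 i]).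
have F_bij : bijective F.
  exists (fun p : T * {ffun 'I_3 -> T} => (p.1, [ffun i => p.1^-1 * p.2 i])).
    by case=> x t; congr (_, _); apply/ffunP => i; rewrite !ffunE mulKg.
  by case=> x t; congr (_, _); apply/ffunP => i; rewrite !ffunE mulKVg.
rewrite -(on_card_preimset (onW_bij _ F_bij)) -cardsT -cardsX.
apply: eq_card => -[x t]; rewrite !inE /=; congr (_ && _); apply: eq_forallb => i.
  by rewrite ffunE !inE cayley_mulKg.
by apply: eq_forallb => j; rewrite !ffunE cayley_mul2l.
Qed.

Section ConnectionSet.
Variable gT : finGroupType.
Implicit Types (a b s u : gT) (A : {set gT}).

Lemma mem_imset_axis1 A a b : ((a, b) \in [set (s, 1) | s in A]) = (b == 1) && (a \in A).
Proof.
apply/imsetP/andP => [[s As [-> ->]]|[/eqP-> Aa]] //.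
by exists a.
Qed.

Lemma mem_imset_axis2 A a b : ((a, b) \in [set (1, s) | s in A]) = (a == 1) && (b \in A).
Proof.
apply/imsetP/andP => [[s As [-> ->]]|[/eqP-> Ab]] //.
by exists b.
Qed.

Lemma mem_imset_diag A a b : ((a, b) \in [set (s, s) | s in A]) = (a == b) && (a \in A).
Proof.
apply/imsetP/andP => [[s As [-> ->]]|[/eqP-> Ab]] //.
by exists b.
Qed.

Lemma memXS a b :
  ((a, b) \in XS gT) = [|| (b == 1) && (a != 1), (a == 1) && (b != 1) | (a == b) && (a != 1)].
Proof. by rewrite !inE mem_imset_axis1 mem_imset_axis2 mem_imset_diag !inE orbA. Qed.

Lemma XGE (x y : gT * gT) : XG gT x y = ((x.1^-1 * y.1, x.2^-1 * y.2) \in XS gT).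
Proof. by case: x y => [? ?] [? ?]. Qed.

Definition line_elt (k : 'I_3) s : gT * gT :=
  match val k with 0 => (s, 1) | 1 => (1, s) | _ => (s, s) end.

(* [k + k' == 1] singles out the pair of axis lines {0, 1}. *)
Definition line_adj (k : 'I_3) s (k' : 'I_3) s' : bool :=
  if k == k' then s != s' else if (k + k' == 1)%N then s == s'^-1 else s == s'.

Lemma line_elt_inj k k' s s' :
  s != 1 -> s' != 1 -> line_elt k s = line_elt k' s' -> k = k' /\ s = s'.
Proof.
case: k k' => [[|[|[|//]]] ?] [[|[|[|//]]] ?] s1 s'1 [] => *; subst;
  by [split; first apply: val_inj | rewrite eqxx in s1 s'1].
Qed.

Lemma line_elt_XS k s : s != 1 -> line_elt k s \in XS gT.
Proof. by case: k => [[|[|[|//]]] ?] s1; rewrite memXS eqxx s1 ?orbT. Qed.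

Lemma XS_line_elt v : v \in XS gT -> exists k s, s != 1 /\ v = line_elt k s.
Proof.
case: v => a b; rewrite memXS => /or3P[] /andP[/eqP-> nt].
- by exists (Ordinal (isT : 0 < 3)), a.
- by exists (Ordinal (isT : 1 < 3)), b.
- by exists (Ordinal (isT : 2 < 3)), b.
Qed.

Lemma XG_line_elt k k' s s' : s != 1 -> s' != 1 ->
  XG gT (line_elt k s) (line_elt k' s') = line_adj k s k' s'.
Proof.
move=> s1 s'1; rewrite XGE /line_adj.
case: k k' => [[|[|[|//]]] ?] [[|[|[|//]]] ?]; rewrite memXS /= ?invg1 ?mulg1 ?mul1g.
all: rewrite -?eq_mulVg1 ?[_ == _ * _]eq_sym ?mulg_eqr ?mulg_eql ?invg_eq1.
all: rewrite ?(negbTE s1) ?(negbTE s'1).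
all: rewrite ?eqxx /= ?andbT ?andbF ?andbN ?orbF //.
- exact: eqg_invLR.
- by rewrite eq_sym eqg_invLR.
Qed.

Lemma card_XS_pred (P : pred (gT * gT)) :
  #|[set z in XS gT | P z]| = \sum_(k < 3) #|[set s | (s != 1%g) && P (line_elt k s)]|.
Proof.
pose L (p : 'I_3 * gT) := line_elt p.1 p.2.
have -> : [set z in XS gT | P z] = L @: [set p : 'I_3 * gT | (p.2 != 1) && P (L p)].
  apply/setP => z; rewrite inE; apply/andP/imsetP => [[/XS_line_elt [k [s [s1 ->]]] Pz]|[[k s]]].
  - by exists (k, s); rewrite // inE s1.
  - by rewrite inE => /andP[s1 Pz] ->; split; [exact: line_elt_XS|].
rewrite card_in_imset => [|[k s] [k' s']]; last first.
  by rewrite !inE => /andP[s1 _] /andP[s'1 _] /(line_elt_inj s1 s'1) [/= -> ->].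
exact: (card_set_pair (fun k s => (s != 1) && P (line_elt k s))).
Qed.

Lemma card_XS : #|XS gT| = (3 * #|gT|.-1)%N.
Proof.
rewrite -[XS gT]setIT -[_ :&: _]setIdE card_XS_pred.
rewrite (eq_bigr (fun _ => #|gT|.-1)) ?sum_nat_const ?card_ord // => k _.
by rewrite -(cardsC1 1); apply: eq_card => s; rewrite !inE andbT.
Qed.

Lemma card_line_nbrs_same k u : u != 1 ->
  #|[set s | (s != 1) && XG gT (line_elt k u) (line_elt k s)]|.+2 = #|gT|.
Proof.
move=> u1; have n_gt0 : 0 < #|gT| by apply/card_gt0P; exists 1.
rewrite -(prednK n_gt0) -(cardsC1 (1 : gT)) (cardsD1 u) !inE u1 add1n.
congr _.+2; apply: eq_card => s; rewrite !inE [RHS]andbC.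
by case: (eqVneq s 1) => //= s1; rewrite XG_line_elt // /line_adj eqxx eq_sym.
Qed.

Lemma card_line_nbrs_cross k k' u : k != k' -> u != 1 ->
  #|[set s | (s != 1) && XG gT (line_elt k u) (line_elt k' s)]| = 1%N.
Proof.
move=> kk' u1; apply/eqP/cards1P.
exists (if (k + k' == 1)%N then u^-1 else u); apply/setP => s; rewrite !inE.
case: (eqVneq s 1) => [->|s1] /=.
  by case: ifP => _; rewrite eq_sym ?invg_eq1 (negbTE u1).
by rewrite XG_line_elt // /line_adj (negbTE kk'); case: ifP => _; rewrite // eq_sym eqg_invLR.
Qed.

Lemma card_XS_common_XS v : v \in XS gT -> #|[set z in XS gT | XG gT v z]| = #|gT|.
Proof.
case/XS_line_elt => k [u [u1 ->]]; rewrite card_XS_pred (bigD1 k) //=.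
rewrite (eq_bigr (fun _ => 1%N)) => [|k' k'k]; last first.
  by apply: card_line_nbrs_cross; rewrite // eq_sym.
by rewrite (sum1_card (predC1 k)) cardC1 card_ord addn2 card_line_nbrs_same.
Qed.

Lemma nonXS_coords a b :
  (a, b) \notin XS gT -> (a, b) != 1 -> [/\ a != 1, b != 1 & a != b].
Proof.
rewrite memXS; have [->|a1] := eqVneq a 1; have [->|b1] := eqVneq b 1 => //=.
- by rewrite eqxx.
- by rewrite andbT => ->.
Qed.

Lemma card_XS_common_nonXS v : v \notin XS gT -> v != 1 -> #|[set z in XS gT | XG gT v z]| = 6.
Proof.
case: v => a b /nonXS_coords /[apply] -[a1 b1 ab].
have ab1 : a * b^-1 != 1 by rewrite -eq_mulgV1.
have ba1 : b * a^-1 != 1 by rewrite -eq_mulgV1 eq_sym.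
rewrite card_XS_pred !big_ord_recl big_ord0 /line_elt /=.
have -> : [set s | (s != 1) && XG gT (a, b) (s, 1)] = [set a; a * b^-1].
  apply/setP => s; rewrite !inE XGE memXS /= mulg1 invg_eq1 (negbTE b1) /= !mulVg_eq mulg1 andbT.
  case: (eqVneq s a) => [->|_] /=; first by rewrite a1.
  by case: (eqVneq s (a * b^-1)) => [->|]; rewrite ?ab1 ?andbF.
have -> : [set s | (s != 1) && XG gT (a, b) (1, s)] = [set b; b * a^-1].
  apply/setP => s; rewrite !inE XGE memXS /= mulg1 invg_eq1 (negbTE a1) /=.
  rewrite [a^-1 == _]eq_sym !mulVg_eq mulg1 !andbT.
  case: (eqVneq s b) => [->|_] /=; first by rewrite b1.
  by case: (eqVneq s (b * a^-1)) => [->|]; rewrite ?ba1 ?andbF.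
have -> : [set s | (s != 1) && XG gT (a, b) (s, s)] = [set a; b].
  apply/setP => s; rewrite !inE XGE memXS /= (inj_eq (mulIg s)) (inj_eq invg_inj) (negbTE ab).
  rewrite !mulVg_eq !mulg1 orbF.
  case: (eqVneq s a) => [->|_] /=; first by rewrite a1 ab andbF.
  by case: (eqVneq s b) => [->|]; rewrite ?b1 ?andbT ?orbF ?andbF.
by rewrite !cards2 ab [a == _]eq_sym [b == _]eq_sym !mulg_eql !invg_eq1 a1 b1.
Qed.

Lemma line_adj_triangle c0 c1 c2 s0 s1 s2 :
  line_adj c0 s0 c1 s1 -> line_adj c0 s0 c2 s2 -> line_adj c1 s1 c2 s2 ->
  (c0 == c1) && (c1 == c2) \/
  [/\ [&& c0 != c1, c0 != c2 & c1 != c2], s1 = s0, s2 = s0 & s0^-1 = s0].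
Proof.
case: c0 c1 c2 => [[|[|[|//]]] ?] [[|[|[|//]]] ?] [[|[|[|//]]] ?];
  rewrite /line_adj /= => h01 h02 h12; first [by left | right].
all: repeat match goal with h : is_true (_ == _) |- _ => move/eqP: h => h end; subst.
all: repeat match goal with h : _^-1 = _^-1 |- _ => move/invg_inj: h => h end; subst.
all: repeat match goal with h : context [?x^-1^-1] |- _ => rewrite invgK in h end.
all: try match goal with h : is_true (?x != ?x) |- _ => by rewrite eqxx in h end.
all: by rewrite ?invgK.
Qed.

Definition same_line_triangles : {set {ffun 'I_3 -> gT * gT}} :=
  [set [ffun i => line_elt p.1 (p.2 i)] | p : 'I_3 * {ffun 'I_3 -> gT} in
    setX [set: 'I_3] [set t : {ffun 'I_3 -> gT} in ffun_on [set~ 1] | injectiveb t]].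

Definition cross_line_triangles : {set {ffun 'I_3 -> gT * gT}} :=
  [set [ffun i => line_elt (p.2 i) p.1] | p : gT * {ffun 'I_3 -> 'I_3} in
    setX [set u : gT | #[u] == 2] [set c : {ffun 'I_3 -> 'I_3} | injectiveb c]].

Lemma card_same_line_triangles : #|same_line_triangles| = (3 * #|gT|.-1 ^_ 3)%N.
Proof.
rewrite card_in_imset => [|[k t] [k' t']]; last first.
  rewrite !inE /= => /andP[/ffun_onP t1 _] /andP[/ffun_onP t'1 _] /ffunP E.
  have tt' i : k = k' /\ t i = t' i.
    by move: (E i); rewrite !ffunE; apply: line_elt_inj; rewrite -in_setC1.
  by have [-> _] := tt' ord0; congr (_, _); apply/ffunP => i; have [_ ->] := tt' i.
by rewrite cardsX cardsT card_ord card_inj_ffuns_on card_ord cardsC1.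
Qed.

Lemma card_cross_line_triangles : #|cross_line_triangles| = (n_invol gT * 6)%N.
Proof.
rewrite card_in_imset => [|[u c] [u' c']]; last first.
  rewrite !inE /= !order_eq2 => /andP[/andP[u1 _] _] /andP[/andP[u'1 _] _] /ffunP E.
  have cc' i : c i = c' i /\ u = u' by move: (E i); rewrite !ffunE; apply: line_elt_inj.
  by have [_ ->] := cc' ord0; congr (_, _); apply/ffunP => i; have [-> _] := cc' i.
by rewrite cardsX card_inj_ffuns card_ord.
Qed.

Lemma same_cross_line_disjoint : same_line_triangles :&: cross_line_triangles = set0.
Proof.
apply/setP => f; rewrite !inE; apply/negP => /andP[/imsetP[[k t] + ->] /imsetP[[u c]]].
rewrite !inE /= order_eq2 => /andP[/ffun_onP t1 _] /andP[/andP[u1 _] /injectiveP c_inj] /ffunP E.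
have c_const i : c i = k.
  by move: (E i); rewrite !ffunE => /esym /line_elt_inj[//||->]; rewrite -?in_setC1.
by have := c_inj (Ordinal (isT : 0 < 3)) (Ordinal (isT : 1 < 3)); rewrite !c_const => /(_ erefl).
Qed.

Lemma same_line_triangles_sub : same_line_triangles \subset triangles (XG gT) (XS gT).
Proof.
apply/subsetP => f /imsetP[[k t]]; rewrite !inE /= => /andP[/ffun_onP t1 /injectiveP t_inj] ->.
have {}t1 i : t i != 1 by rewrite -in_setC1 t1.
apply/andP; split; apply/forallP => i; rewrite ffunE ?line_elt_XS //.
apply/forallP => j; apply/implyP => ij; rewrite !ffunE XG_line_elt // /line_adj eqxx.
by apply: contra ij => /eqP/t_inj ->.
Qed.

Lemma cross_line_triangles_sub : cross_line_triangles \subset triangles (XG gT) (XS gT).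
Proof.
apply/subsetP => f /imsetP[[u c]]; rewrite !inE /= order_eq2.
move=> /andP[/andP[u1 /eqP uVu] /injectiveP c_inj] ->.
apply/andP; split; apply/forallP => i; rewrite ffunE ?line_elt_XS //.
apply/forallP => j; apply/implyP => ij; rewrite !ffunE XG_line_elt // /line_adj.
by rewrite (inj_eq c_inj) (negbTE ij) uVu eqxx; case: ifP.
Qed.

Lemma triangles_XS_sub :
  triangles (XG gT) (XS gT) \subset same_line_triangles :|: cross_line_triangles.
Proof.
apply/subsetP => t; rewrite inE => /andP[/forallP tS /forallP t_adj].
have /fin_all_exists[p tE] i : exists p : 'I_3 * gT, p.2 != 1 /\ t i = line_elt p.1 p.2.
  by have [k [s [s1 ->]]] := XS_line_elt (tS i); exists (k, s).
pose c i := (p i).1; pose s i := (p i).2.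
have t_eq : t = [ffun i => line_elt (c i) (s i)] by apply/ffunP => i; rewrite ffunE (tE i).2.
have adj i j : i != j -> line_adj (c i) (s i) (c j) (s j).
  move=> ij; have := implyP (forallP (t_adj i) j) ij.
  by rewrite (tE i).2 (tE j).2 XG_line_elt //; [apply: (tE i).1 | apply: (tE j).1].
set i0 := Ordinal (isT : 0 < 3); set i1 := Ordinal (isT : 1 < 3); set i2 := Ordinal (isT : 2 < 3).
have [/andP[/eqP c01 /eqP c12] | [/and3P[c01 c02 c12] s10 s20 s0V]] :=
  line_adj_triangle (adj i0 i1 isT) (adj i0 i2 isT) (adj i1 i2 isT).
- have c_const : forall i, c i = c i0 by apply: ord3P; rewrite // -c12.
  apply/setUP; left; apply/imsetP; exists (c i0, [ffun i => s i]).
    rewrite !inE /=; apply/andP; split.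
      by apply/ffun_onP => i; rewrite ffunE in_setC1; apply: (tE i).1.
    apply/injectiveP => i j; rewrite !ffunE => sij; apply/eqP/negPn/negP => ij.
    by have := adj i j ij; rewrite /line_adj !c_const eqxx sij eqxx.
  by rewrite t_eq; apply/ffunP => i; rewrite !ffunE c_const.
- have s_const : forall i, s i = s i0 by apply: ord3P.
  apply/setUP; right; apply/imsetP; exists (s i0, [ffun i => c i]).
    rewrite !inE /= order_eq2 (tE i0).1 s0V eqxx /=.
    apply/injectiveP => i j; rewrite !ffunE.
    have c_neq := (negbTE c01, negbTE c02, negbTE c12).
    by elim/ord3P: i; elim/ord3P: j => // /eqP; rewrite ?c_neq // eq_sym ?c_neq.
  by rewrite t_eq; apply/ffunP => i; rewrite !ffunE s_const.
Qed.

Lemma card_triangles_XS :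
  #|triangles (XG gT) (XS gT)| = (3 * #|gT|.-1 ^_ 3 + n_invol gT * 6)%N.
Proof.
have -> : triangles (XG gT) (XS gT) = same_line_triangles :|: cross_line_triangles.
  apply/eqP; rewrite eqEsubset triangles_XS_sub subUset.
  by rewrite same_line_triangles_sub cross_line_triangles_sub.
rewrite cardsU same_cross_line_disjoint cards0 subn0.
by rewrite card_same_line_triangles card_cross_line_triangles.
Qed.

Lemma XG_srg : 3 <= #|gT| -> srg (XG gT) (#|gT| ^ 2) (3 * #|gT| - 3) #|gT| 6.
Proof.
move=> n_ge3; split.
- by rewrite card_prod mulnn.
- have : 1 < #|[set~ (1 : gT)]| by rewrite cardsC1 -ltnS prednK // (leq_trans _ n_ge3).
  case/card_gt1P => a [b []]; rewrite !in_setC1 => a1 b1 ab.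
  exists 1, (a, b); split; first by apply: contra a1 => /eqP[<-].
  by rewrite /XG cayley1g memXS (negbTE a1) (negbTE b1) (negbTE ab).
- by move=> x; rewrite /XG card_cayley_nbhd card_XS -subn1 mulnBr muln1.
- by move=> x y xy; rewrite /XG card_cayley_common card_XS_common_XS.
- by move=> x y xy nxy; rewrite /XG card_cayley_common card_XS_common_nonXS // -eq_mulVg1.
Qed.

End ConnectionSet.

Theorem mainTheorem3 (n : nat) (hn : 3 <= n) :
  (forall gT : finGroupType, #|gT| = n ->
     srg (XG gT) (n ^ 2) (3 * n - 3) n 6) /\
  (forall gT hT : finGroupType, #|gT| = n -> #|hT| = n ->
     graph_iso (XG gT) (XG hT) -> n_invol gT = n_invol hT).
Proof.
split=> [gT nG|gT hT nG nH iso]; first by rewrite -nG; apply: XG_srg; rewrite nG.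
have := card_rooted_K4_iso iso.
rewrite /XG !card_rooted_K4_cayley -!/(XG _) !card_triangles_XS !card_prod nG nH.
have n2_gt0 : 0 < n * n by rewrite muln_gt0 andbb (leq_trans _ hn).
by move/eqP; rewrite eqn_pmul2l // eqn_add2l eqn_pmul2r // => /eqP.
Qed.
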